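(* The number $K_T$ of episodes of \texttt{UCMNLK} over $T$ steps satisfies $K_T\le1+d\log_2(1+2TL_\varphi^2/\lambda)$.
   Context: \texttt{UCMNLK} maintains $\Sigma_1=\lambda I_d$ ($\lambda>0$) and $\Sigma_{t+1}=\Sigma_t+\nabla^2\ell_t(\widehat\theta_{t+1})$, where $\ell_t(\theta)=-\sum_{s'\in\mathcal S_t}y_{t,s'}\log p_{t,s'}(\theta)$ is the multinomial log-loss at step $t$ with Hessian $\nabla^2\ell_t(\theta)=\sum_{s'}p_{t,s'}(\theta)\varphi_{t,s'}\varphi_{t,s'}^\top-\sum_{s',s''}p_{t,s'}(\theta)p_{t,s''}(\theta)\varphi_{t,s'}\varphi_{t,s''}^\top$, $p_{t,\cdot}(\theta)$ a probability vector on the finite set $\mathcal S_t$, and $\|\varphi_{t,s'}\|_2\le L_\varphi$. A new episode starts at time $t$ (and $t_{k+1}=t$) as soon as $\det\Sigma_t>2\det\Sigma_{t_k}$, where $t_k$ is the start of the current episode. *)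

From HB Require Import structures.
From mathcomp Require Import all_boot all_order all_algebra.
From mathcomp Require Import all_classical all_reals all_analysis.
Set Implicit Arguments. Unset Strict Implicit. Unset Printing Implicit Defensive.
Import Order.TTheory GRing.Theory Num.Theory.
Local Open Scope ring_scope.

Definition norm2 {R : realType} {d : nat} (v : 'cV[R]_d) : R :=
  Num.sqrt (\sum_(i < d) (v i 0) ^+ 2).

Definition log2 {R : realType} (x : R) : R := ln x / ln 2.

(* Hessian of the multinomial log-loss on a finite set 'I_m, given the
   probability vector p (evaluated at the relevant parameter) and features phi:
   sum_s p_s phi_s phi_s^T - sum_{s,s'} p_s p_s' phi_s phi_s'^T *)
Definition mnl_hessian {R : realType} {d m : nat}
  (p : 'I_m -> R) (phi : 'I_m -> 'cV[R]_d) : 'M[R]_d :=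
  \sum_(s < m) p s *: (phi s *m (phi s)^T)
  - \sum_(s < m) \sum_(s' < m) (p s * p s') *: (phi s *m (phi s')^T).

(* Sigma_t = lambda I + sum_{1 <= s < t} H_s, so Sigma_1 = lambda I and
   Sigma_{t+1} = Sigma_t + H_t. *)
Definition Sigma {R : realType} {d : nat} (lam : R) (H : nat -> 'M[R]_d)
  (t : nat) : 'M[R]_d :=
  lam%:M + \sum_(1 <= s < t) H s.

(* episode_state n = (start of current episode, number of episodes so far)
   at time t = n+1. Time 1 starts episode 1; at time t >= 2 a new episode
   starts iff det Sigma_t > 2 det Sigma_{t_k}. *)
Fixpoint episode_state {R : realType} {d : nat} (lam : R)
  (H : nat -> 'M[R]_d) (n : nat) : nat * nat :=
  match n with
  | 0 => (1%N, 1%N)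
  | n'.+1 =>
      let: (s, k) := episode_state lam H n' in
      if 2 * \det (Sigma lam H s) < \det (Sigma lam H n'.+2)
      then (n'.+2, k.+1) else (s, k)
  end.

Definition num_episodes {R : realType} {d : nat} (lam : R)
  (H : nat -> 'M[R]_d) (T : nat) : nat :=
  (episode_state lam H T.-1).2.

(* Each new episode at least doubles det Sigma, and det Sigma_1 = lam^d, so at the
   start t_K of the K-th episode det Sigma_(t_K) >= 2^(K-1) lam^d.  Conversely, each
   Hessian is the covariance matrix of the features under p, hence symmetric positive
   semidefinite with trace at most E_p |phi|^2 <= L^2.  So Sigma_t is symmetric
   positive definite with trace at most d lam + (t-1) L^2, and Hadamard's inequality
   followed by AM-GM on the diagonal gives det Sigma_t <= (lam + (t-1) L^2)^d.
   Comparing the two bounds and taking log2 yields the claim.  Hadamard's inequality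
   is proved by induction on the dimension, passing to the Schur complement of the
   first pivot. *)

From HB Require Import structures.
From mathcomp Require Import all_boot all_order all_algebra.
From mathcomp Require Import all_classical all_reals all_analysis.
From mathcomp Require Import ring lra zify.
Set Implicit Arguments. Unset Strict Implicit. Unset Printing Implicit Defensive.
Import Order.TTheory GRing.Theory Num.Theory.
Local Open Scope ring_scope.

Section QuadraticForm.
Variable R : realFieldType.

Definition qform n (x : 'cV[R]_n) (A : 'M[R]_n) : R := (x^T *m A *m x) 0 0.

Definition symmetricmx n (A : 'M[R]_n) := forall i j, A i j = A j i.
Definition psdmx n (A : 'M[R]_n) := forall x, 0 <= qform x A.
Definition posdefmx n (A : 'M[R]_n) := forall x, x != 0 -> 0 < qform x A.

Fact qform_is_nmod_morphism n (x : 'cV[R]_n) : nmod_morphism (qform x).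
Proof. by split=> [|A B]; rewrite /qform ?mulmx0 ?mul0mx ?mulmxDr ?mulmxDl mxE. Qed.

HB.instance Definition _ n (x : 'cV[R]_n) :=
  GRing.isNmodMorphism.Build 'M[R]_n R (qform x) (qform_is_nmod_morphism x).

Lemma qformZ n (x : 'cV[R]_n) a A : qform x (a *: A) = a * qform x A.
Proof. by rewrite /qform -scalemxAr -scalemxAl mxE. Qed.

Lemma qformE n (x : 'cV[R]_n) A :
  qform x A = \sum_i \sum_j x i 0 * A i j * x j 0.
Proof.
rewrite /qform mxE exchange_big; apply: eq_bigr => j _.
by rewrite mxE big_distrl; apply: eq_bigr => i _; rewrite !mxE.
Qed.

Lemma qform_delta n (A : 'M[R]_n) i : qform (delta_mx i 0) A = A i i.
Proof. by rewrite /qform trmx_delta -rowE -colE !mxE. Qed.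

Lemma qform_outer n (x u v : 'cV[R]_n) :
  qform x (u *m v^T) = (x^T *m u) 0 0 * (x^T *m v) 0 0.
Proof.
rewrite /qform mulmxA -mulmxA mxE big_ord1.
by rewrite -[v^T *m x]trmxK trmx_mul trmxK [(_^T) 0 0]mxE.
Qed.

Lemma sum_sqr_col_gt0 n (x : 'cV[R]_n) : x != 0 -> 0 < \sum_i x i 0 ^+ 2.
Proof.
move=> x_neq0; rewrite lt0r sumr_ge0 ?andbT => [|i _]; last exact: sqr_ge0.
apply: contra x_neq0; rewrite psumr_eq0 => [/allP x0|i _]; last exact: sqr_ge0.
apply/eqP/matrixP => i j; rewrite (ord1 j) mxE; apply/eqP.
by rewrite -sqrf_eq0; apply: x0; rewrite mem_index_enum.
Qed.

Lemma posdefmx_scalar n a : 0 < a -> posdefmx (a%:M : 'M[R]_n).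
Proof.
move=> a_gt0 x x_neq0; rewrite /qform mul_mx_scalar -scalemxAl mxE.
rewrite mulr_gt0 // mxE; under eq_bigr do rewrite mxE -expr2.
exact: sum_sqr_col_gt0.
Qed.

Lemma posdefmx_addr n (A B : 'M[R]_n) : posdefmx A -> psdmx B -> posdefmx (A + B).
Proof.
by move=> A_pd B_psd x x_neq0; rewrite raddfD; exact: (ltr_wpDr (B_psd x) (A_pd x x_neq0)).
Qed.

Lemma psdmx_sum n I (r : seq I) (P : pred I) (F : I -> 'M[R]_n) :
  (forall i, P i -> psdmx (F i)) -> psdmx (\sum_(i <- r | P i) F i).
Proof.
move=> F_psd x; rewrite raddf_sum.
by apply: sumr_ge0 => i Pi; apply: F_psd.
Qed.

Lemma posdefmx_diag_gt0 n (A : 'M[R]_n) i : posdefmx A -> 0 < A i i.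
Proof.
move=> A_pd; rewrite -qform_delta A_pd //.
by apply/eqP => /matrixP/(_ i 0)/eqP; rewrite !mxE !eqxx oner_eq0.
Qed.

Lemma sqr_wmean_le m (w y : 'I_m -> R) :
  (forall s, 0 <= w s) -> \sum_s w s = 1 ->
  (\sum_s w s * y s) ^+ 2 <= \sum_s w s * y s ^+ 2.
Proof.
move=> w_ge0 w_sum1; set mu := \sum_s w s * y s.
have var_ge0 : 0 <= \sum_s w s * (y s - mu) ^+ 2.
  by apply: sumr_ge0 => s _; rewrite mulr_ge0 ?sqr_ge0.
have var_eq : \sum_s w s * (y s - mu) ^+ 2 =
    \sum_s (w s * y s ^+ 2 - 2 * mu * (w s * y s) + mu ^+ 2 * w s).
  by apply: eq_bigr => s _; ring.
rewrite var_eq big_split sumrB /= -!mulr_sumr w_sum1 -/mu in var_ge0; lra.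
Qed.

Definition schur_compl n (A : 'M[R]_n.+1) : 'M[R]_n :=
  \matrix_(i, j) (A (lift 0 i) (lift 0 j) - A (lift 0 i) 0 * A 0 (lift 0 j) / A 0 0).

Section SchurComplement.
Variables (n : nat) (A : 'M[R]_n.+1).
Local Notation a := (A 0 0).

Lemma det_schur_compl : a != 0 -> \det A = a * \det (schur_compl A).
Proof.
move=> a_neq0.
(* E is unit lower triangular and clears the first column below the pivot. *)
pose E := 1%:M - \matrix_(i, k) (((k == 0) && (i != 0))%:R * (A i 0 / a)).
have detE : \det E = 1.
  rewrite det_trig; last first.
    apply/forallP => i; apply/forallP => j; apply/implyP => lt_ij; rewrite !mxE.
    have j_gt0 : (0 < j)%N by apply: leq_ltn_trans lt_ij.
    by rewrite -!val_eqE /= ltn_eqF // gtn_eqF // mul0r subr0.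
  apply: big1 => i _; rewrite !mxE eqxx.
  by case: (i == 0); rewrite /= ?mul0r ?subr0 ?mul1r ?subrr.
have EAE i j : (E *m A) i j = A i j - (i != 0)%:R * (A i 0 / a) * A 0 j.
  rewrite mulmxBl mul1mx !mxE (bigD1 0) //= big1 => [|k /negbTE k_neq0]; last first.
    by rewrite !mxE k_neq0 !mul0r.
  by rewrite !mxE eqxx addr0.
rewrite -[\det A]mul1r -detE -det_mulmx (expand_det_col _ 0) big_ord_recl big1.
  rewrite addr0 EAE eqxx mul0r mul0r subr0 /cofactor /= expr0 mul1r; congr (_ * \det _).
  apply/matrixP => i j; rewrite [LHS]mxE [LHS]mxE EAE mxE.
  by rewrite eq_sym neq_lift mul1r mulrAC.
by move=> i _; rewrite EAE eq_sym neq_lift mul1r divfK // subrr mul0r.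
Qed.

Lemma symmetricmx_schur_compl : symmetricmx A -> symmetricmx (schur_compl A).
Proof.
move=> A_sym i j; rewrite !mxE (A_sym (lift 0 i)) (A_sym (lift 0 i) 0) (A_sym 0 (lift 0 j)).
by rewrite [A 0 (lift 0 i) * _]mulrC.
Qed.

Lemma schur_compl_diag_le i :
  symmetricmx A -> 0 < a -> schur_compl A i i <= A (lift 0 i) (lift 0 i).
Proof.
by move=> A_sym a_gt0; rewrite mxE gerBl (A_sym _ 0) -expr2 divr_ge0 ?sqr_ge0 ?ltW.
Qed.

Lemma posdefmx_schur_compl : posdefmx A -> posdefmx (schur_compl A).
Proof.
move=> A_pd x x_neq0; have a_neq0 : a != 0 by rewrite gt_eqF ?posdefmx_diag_gt0.
pose g := \sum_j A 0 (lift 0 j) * x j 0.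
(* The first coordinate of z minimizes the form, so the pivot row contributes 0. *)
pose z := \col_i oapp (fun k => x k 0) (- g / a) (unlift 0 i) : 'cV[R]_n.+1.
have z0 : z 0 0 = - g / a by rewrite mxE unlift_none.
have z_lift k : z (lift 0 k) 0 = x k 0 by rewrite mxE liftK.
have z_neq0 : z != 0.
  apply: contra x_neq0 => /eqP z_eq0; apply/eqP/matrixP => i j.
  by rewrite (ord1 j) -z_lift z_eq0 !mxE.
suff <- : qform z A = qform x (schur_compl A) by exact: A_pd.
rewrite !qformE big_ord_recl.
have -> : \sum_j z 0 0 * A 0 j * z j 0 = 0.
  rewrite big_ord_recl z0; under eq_bigr do rewrite z_lift -mulrA.
  by rewrite -mulr_sumr -/g; field.
rewrite add0r; apply: eq_bigr => k _; rewrite z_lift big_ord_recl z0.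
under eq_bigr do rewrite z_lift.
have -> : \sum_j x k 0 * schur_compl A k j * x j 0 =
    \sum_j (x k 0 * A (lift 0 k) (lift 0 j) * x j 0
            - x k 0 * A (lift 0 k) 0 / a * (A 0 (lift 0 j) * x j 0)).
  by apply: eq_bigr => j _; rewrite mxE; ring.
by rewrite sumrB -mulr_sumr -/g; ring.
Qed.

End SchurComplement.

Lemma det_le_prod_diag n (A : 'M[R]_n) :
  symmetricmx A -> posdefmx A -> \det A <= \prod_i A i i.
Proof.
elim: n A => [|n IHn] A A_sym A_pd; first by rewrite det_mx00 big_ord0.
have a_gt0 := posdefmx_diag_gt0 0 A_pd.
rewrite det_schur_compl ?gt_eqF // big_ord_recl ler_pM2l //.
have S_pd := posdefmx_schur_compl A_pd.
apply: le_trans (IHn _ (symmetricmx_schur_compl A_sym) S_pd) _.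
by apply: ler_prod => i _; rewrite ltW ?posdefmx_diag_gt0 ?schur_compl_diag_le.
Qed.

Lemma det_le_trace_pow n (A : 'M[R]_n) :
  symmetricmx A -> posdefmx A -> \det A <= (\tr A / n%:R) ^+ n.
Proof.
move=> A_sym A_pd; apply: le_trans (det_le_prod_diag A_sym A_pd) _.
have diag_ge0 i : 0 <= A i i := ltW (posdefmx_diag_gt0 i A_pd).
have [] := leif_AGM (A := predT) (E := fun i => A i i) (fun i _ => diag_ge0 i).
by rewrite card_ord.
Qed.

End QuadraticForm.

Section MultinomialHessian.
Variables (R : realType) (d m : nat) (p : 'I_m -> R) (phi : 'I_m -> 'cV[R]_d).

Lemma qform_mnl_hessian x : qform x (mnl_hessian p phi) =
  \sum_s p s * (x^T *m phi s) 0 0 ^+ 2 - (\sum_s p s * (x^T *m phi s) 0 0) ^+ 2.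
Proof.
rewrite /mnl_hessian raddfB; congr (_ - _); rewrite raddf_sum.
  by apply: eq_bigr => s _ /=; rewrite qformZ qform_outer expr2.
rewrite expr2 mulr_suml; apply: eq_bigr => s _; rewrite raddf_sum mulr_sumr.
by apply: eq_bigr => s' _ /=; rewrite qformZ qform_outer mulrACA.
Qed.

Lemma symmetricmx_mnl_hessian : symmetricmx (mnl_hessian p phi).
Proof.
suff H_tr : (mnl_hessian p phi)^T = mnl_hessian p phi.
  by move=> i j; rewrite -[in LHS]H_tr mxE.
rewrite /mnl_hessian linearB /=; congr (_ - _); rewrite linear_sum.
  by apply: eq_bigr => s _ /=; rewrite linearZ /= trmx_mul trmxK.
rewrite (eq_bigr (fun s => \sum_s' ((p s * p s') *: (phi s *m (phi s')^T))^T)) => [|s _];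
  last exact: raddf_sum.
rewrite exchange_big; apply: eq_bigr => s _; apply: eq_bigr => s' _ /=.
by rewrite linearZ /= trmx_mul trmxK mulrC.
Qed.

Lemma psdmx_mnl_hessian :
  (forall s, 0 <= p s) -> \sum_s p s = 1 -> psdmx (mnl_hessian p phi).
Proof. by move=> p_ge0 p_sum1 x; rewrite qform_mnl_hessian subr_ge0 sqr_wmean_le. Qed.

Lemma mnl_hessian_diag_le i : mnl_hessian p phi i i <= \sum_s p s * phi s i 0 ^+ 2.
Proof.
rewrite -qform_delta qform_mnl_hessian trmx_delta.
have row_phi s : ((delta_mx 0 i : 'rV[R]_d) *m phi s) 0 0 = phi s i 0 by rewrite -rowE mxE.
under eq_bigr do rewrite row_phi.
by rewrite gerBl sqr_ge0.
Qed.

Lemma trace_mnl_hessian_le L :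
  (forall s, 0 <= p s) -> \sum_s p s = 1 -> (forall s, norm2 (phi s) <= L) ->
  \tr (mnl_hessian p phi) <= L ^+ 2.
Proof.
move=> p_ge0 p_sum1 phi_le.
apply: le_trans (ler_sum _ (fun i _ => mnl_hessian_diag_le i)) _.
rewrite exchange_big /= -[L ^+ 2]mul1r -p_sum1 mulr_suml; apply: ler_sum => s _.
rewrite -mulr_sumr; apply: ler_wpM2l => //.
have norm_ge0 : 0 <= norm2 (phi s) := sqrtr_ge0 _.
rewrite -[X in X <= _]sqr_sqrtr; last by apply: sumr_ge0 => i _; exact: sqr_ge0.
by rewrite !expr2; exact: (ler_pM norm_ge0 norm_ge0 (phi_le s) (phi_le s)).
Qed.

End MultinomialHessian.

Section SigmaBounds.
Variables (R : realType) (d : nat) (lam : R) (H : nat -> 'M[R]_d).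

Lemma symmetricmx_Sigma t :
  (forall s, symmetricmx (H s)) -> symmetricmx (Sigma lam H t).
Proof.
move=> H_sym i j; rewrite !mxE !summxE eq_sym; congr (_ + _).
by apply: eq_bigr => s _; apply: H_sym.
Qed.

Lemma posdefmx_Sigma t :
  0 < lam -> (forall s, psdmx (H s)) -> posdefmx (Sigma lam H t).
Proof.
move=> lam_gt0 H_psd; apply: posdefmx_addr; first exact: posdefmx_scalar.
by apply: psdmx_sum => s _; apply: H_psd.
Qed.

Lemma trace_Sigma t : \tr (Sigma lam H t) = lam *+ d + \sum_(1 <= s < t) \tr (H s).
Proof. by rewrite mxtraceD mxtrace_scalar raddf_sum. Qed.

Lemma det_Sigma_le L t :
  0 < lam -> (forall s, symmetricmx (H s)) -> (forall s, psdmx (H s)) ->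
  (forall s, \tr (H s) <= L ^+ 2) ->
  \det (Sigma lam H t) <= (lam + t.-1%:R * L ^+ 2) ^+ d.
Proof.
move=> lam_gt0 H_sym H_psd H_tr.
have Sigma_pd := posdefmx_Sigma t lam_gt0 H_psd.
apply: le_trans (det_le_trace_pow (symmetricmx_Sigma t H_sym) Sigma_pd) _.
have tr_le : \tr (Sigma lam H t) <= lam *+ d + t.-1%:R * L ^+ 2.
  rewrite trace_Sigma lerD2l; apply: le_trans (ler_sum _ (fun s _ => H_tr s)) _.
  by rewrite sumr_const_nat subn1 mulr_natl.
have tr_ge0 : 0 <= \tr (Sigma lam H t).
  by apply: sumr_ge0 => i _; exact: ltW (posdefmx_diag_gt0 i Sigma_pd).
have tL_ge0 : 0 <= t.-1%:R * L ^+ 2 := mulr_ge0 (ler0n _ _) (sqr_ge0 _).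
have rhs_ge0 : 0 <= lam + t.-1%:R * L ^+ 2 := addr_ge0 (ltW lam_gt0) tL_ge0.
apply: lerXn2r; rewrite ?nnegrE ?divr_ge0 //.
have [d_eq0 | d_gt0] := posnP d.
  have -> : d%:R = 0 :> R by rewrite d_eq0.
  by rewrite invr0 mulr0.
rewrite ler_pdivrMr ?ltr0n //; apply: le_trans tr_le _; rewrite mulrDl mulr_natr lerD2l.
by rewrite ler_peMr // ler1n.
Qed.

End SigmaBounds.

Lemma episode_state_spec (R : realType) d (lam : R) (H : nat -> 'M[R]_d) n :
  let: (s, k) := episode_state lam H n in
  [/\ (s <= n.+1)%N, (0 < k)%N & 2 ^+ k.-1 * lam ^+ d <= \det (Sigma lam H s)].
Proof.
elim: n => [|n] /=; first by rewrite /Sigma big_geq // addr0 det_scalar mul1r.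
case: episode_state => s k [le_s_n k_gt0 det_ge]; case: ifP => [lt_det | _].
  split=> //=; rewrite -(prednK k_gt0) exprS -mulrA.
  by apply: le_trans (ltW lt_det); rewrite ler_pM2l.
by split=> //; apply: leqW.
Qed.

Lemma pow2_le_log2 (R : realType) (k d : nat) (x : R) :
  0 < x -> 2 ^+ k <= x ^+ d -> k%:R <= d%:R * log2 x.
Proof.
move=> x_gt0 le_pow; have ln2_gt0 : 0 < ln (2 : R) by rewrite ln_gt0 // ltr1n.
rewrite /log2 mulrA ler_pdivlMr // !mulr_natl -!lnXn //.
by rewrite ler_ln ?posrE ?exprn_gt0.
Qed.

Theorem lemma21 (R : realType) (d : nat) (lam L : R) (T : nat)
  (m : nat -> nat)
  (p : forall t : nat, 'I_(m t) -> R)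
  (phi : forall t : nat, 'I_(m t) -> 'cV[R]_d) :
  0 < lam ->
  (forall t (s : 'I_(m t)), 0 <= p t s) ->
  (forall t, \sum_(s < m t) p t s = 1) ->
  (forall t (s : 'I_(m t)), norm2 (phi t s) <= L) ->
  (num_episodes lam (fun t => mnl_hessian (p t) (phi t)) T)%:R
    <= 1 + d%:R * log2 (1 + 2 * T%:R * L ^+ 2 / lam).
Proof.
move=> lam_gt0 p_ge0 p_sum1 phi_le; set H := fun t => mnl_hessian (p t) (phi t).
rewrite /num_episodes; have := episode_state_spec lam H T.-1.
case: episode_state => s k /= [le_s_T k_gt0 det_ge].
set x := 1 + 2 * T%:R * L ^+ 2 / lam.
have TL_ge0 : 0 <= 2 * T%:R * L ^+ 2 :=
  mulr_ge0 (mulr_ge0 (ler0n _ 2) (ler0n _ T)) (sqr_ge0 L).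
have x_gt0 : 0 < x := ltr_wpDr (divr_ge0 TL_ge0 (ltW lam_gt0)) ltr01.
have det_le : \det (Sigma lam H s) <= (lam * x) ^+ d.
  apply: le_trans (det_Sigma_le (L := L) s lam_gt0 _ _ _) _.
  - by move=> t; apply: symmetricmx_mnl_hessian.
  - by move=> t; apply: psdmx_mnl_hessian.
  - by move=> t; apply: trace_mnl_hessian_le.
  apply: lerXn2r; rewrite ?nnegrE.
  - exact: (addr_ge0 (ltW lam_gt0) (mulr_ge0 (ler0n _ _) (sqr_ge0 _))).
  - exact: (mulr_ge0 (ltW lam_gt0) (ltW x_gt0)).
  rewrite /x mulrDr mulr1 lerD2l [lam * _]mulrCA mulfV ?gt_eqF // mulr1.
  apply: ler_wpM2r; first exact: sqr_ge0.
  by rewrite -natrM ler_nat; lia.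
rewrite -(prednK k_gt0) -add1n natrD lerD2l; apply: pow2_le_log2 => //.
rewrite -(ler_pM2r (exprn_gt0 d lam_gt0)) -exprMn [x * _]mulrC.
exact: le_trans det_ge det_le.
Qed.
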